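(* Let $n\geq 4$ and let $T_n$ be the group with generators $z,t_1,\dots,t_{n-1}$ and relations $t_i^2=1$ ($1\le i\le n-1$), $(t_jt_{j+1})^3=1$ ($1\le j\le n-2$), $(t_kt_l)^2=z$ (for $k\le l-2$), $z^2=1$ and $zt_i=t_iz$ ($1\le i\le n-1$). Let $i,j\in\{1,\dots,n\}$ with $i\neq j$ and let $k\in\{1,\dots,n-1\}$. Then \[ s_k\triangleright [i\;j]=[s_k(i)\;s_k(j)]\,z . \]
   Context: $\mathbb{S}_n$ is the symmetric group, $s_k=(k\;k+1)$ denotes the adjacent transposition, and $p:T_n\to\mathbb{S}_n$ is the surjective homomorphism with $p(t_k)=s_k$, $p(z)=1$; its kernel is $\langle z\rangle$, which is central of order $2$. For $\sigma\in\mathbb{S}_n$ and $t\in T_n$, define $\sigma\triangleright t=\bar\sigma t\bar\sigma^{-1}$, where $\bar\sigma\in T_n$ is any element with $p(\bar\sigma)=\sigma$ (this is independent of the choice since $z$ is central). For $1\le i,j\le n$, $i\ne j$, the elements $[i\;j]\in T_n$ are defined inductively by $[i\;i+1]=t_i$; $[i\;j]=(s_i\triangleright[i+1\;j])\,z$ for $i+1<j$; and $[j\;i]=[i\;j]\,z$ for $i<j$. *)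

From mathcomp Require Import all_boot.
Set Implicit Arguments. Unset Strict Implicit. Unset Printing Implicit Defensive.

(* Since every generator is an involution (x^2 = 1 is a relation), the group
   is the monoid presented by the same generators and relations: words over
   the generators modulo the congruence generated by the relations. *)

Inductive gen : Type := Z | T of nat.

Definition word := seq gen.

Inductive Tn_rel (n : nat) : word -> word -> Prop :=
| rel_tt i : 1 <= i -> i <= n - 1 -> Tn_rel n [:: T i; T i] [::]
| rel_braid j : 1 <= j -> j <= n - 2 ->
    Tn_rel n [:: T j; T j.+1; T j; T j.+1; T j; T j.+1] [::]
| rel_far k l : 1 <= k -> k <= l - 2 -> l <= n - 1 ->
    Tn_rel n [:: T k; T l; T k; T l] [:: Z]
| rel_zz : Tn_rel n [:: Z; Z] [::]
| rel_zt i : 1 <= i -> i <= n - 1 -> Tn_rel n [:: Z; T i] [:: T i; Z].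

Inductive Tn_eq (n : nat) : word -> word -> Prop :=
| Tn_refl u : Tn_eq n u u
| Tn_sym u v : Tn_eq n u v -> Tn_eq n v u
| Tn_trans u v w : Tn_eq n u v -> Tn_eq n v w -> Tn_eq n u w
| Tn_step a b u v : Tn_rel n u v -> Tn_eq n (a ++ u ++ b) (a ++ v ++ b).

(* Inverse of a word in T_n: all generators are involutions. *)
Definition winv (u : word) : word := rev u.

(* sigma |> t = lift(sigma) * t * lift(sigma)^-1.  For sigma = s_k we use the
   lift t_k (p(t_k) = s_k); the result is independent of the lift. *)
Definition act_s (k : nat) (t : word) : word := [:: T k] ++ t ++ winv [:: T k].

Definition s_ (k i : nat) : nat :=
  if i == k then k.+1 else if i == k.+1 then k else i.

(* brup i d = [i  i+d+1]  (for i < j = i+d+1), via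
   [i i+1] = t_i,  [i j] = (s_i |> [i+1 j]) z. *)
Fixpoint brup (i d : nat) : word :=
  match d with
  | 0 => [:: T i]
  | d'.+1 => act_s i (brup i.+1 d') ++ [:: Z]
  end.

(* [i j] for i <> j; [j i] = [i j] z for i < j. *)
Definition br (i j : nat) : word :=
  if i < j then brup i (j - i - 1) else brup j (i - j - 1) ++ [:: Z].

From mathcomp Require Import all_boot.
From mathcomp Require Import zify.
From Stdlib Require Import Setoid Morphisms.

(* The word [br i j] is built recursively as [i j] = t_i [i+1 j] t_i z, so
   conjugating it by t_k is a case analysis on the position of k relative to
   the interval [i, j].  For k = i - 1 or k = i this is the recursion itself.
   For k = j the recursion reduces the claim to t_{i+1} t_i t_{i+1} =
   t_i t_{i+1} t_i, since t_j commutes with t_i up to z; the case k = j - 1 is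
   the inverse of the case k = j.  In the remaining cases t_k commutes with
   [i j] up to z: when k is far from the ends, t_k passes through the outer
   letters t_i; when k = i + 1, a braid relation moves t_{i+1} through the
   outer t_i t_{i+1} and reduces to t_i commuting with [i+2 j].  Finally
   [j i] = [i j] z and z is central. *)

Lemma s_L k : s_ k k = k.+1.
Proof. by rewrite /s_ eqxx. Qed.

Lemma s_R k : s_ k k.+1 = k.
Proof. by rewrite /s_ eqxx gtn_eqF. Qed.

Lemma s_D k i : i != k -> i != k.+1 -> s_ k i = i.
Proof. by rewrite /s_ => /negbTE-> /negbTE->. Qed.

Lemma s_K k : involutive (s_ k).
Proof. by move=> i; rewrite /s_; do !case: eqP; lia. Qed.

Section Tn.
Variable n : nat.
Local Notation "u ~ v" := (Tn_eq n u v) (at level 70).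

Lemma Tn_eq_cat2 a b u v : u ~ v -> a ++ u ++ b ~ a ++ v ++ b.
Proof.
elim=> {u v} [u|u v _ IH|u v w _ IH1 _ IH2|a' b' u v uRv].
- exact: Tn_refl.
- exact: Tn_sym.
- exact: Tn_trans IH2.
- by have := Tn_step (a ++ a') (b' ++ b) uRv; rewrite !catA -!(catA _ _ b') -!catA.
Qed.

Global Instance Tn_eq_Equivalence : Equivalence (Tn_eq n).
Proof. by split; [exact: Tn_refl | exact: Tn_sym | exact: Tn_trans]. Qed.

Global Instance cat_Tn_eq_Proper :
  Proper (Tn_eq n ==> Tn_eq n ==> Tn_eq n) (@cat gen).
Proof.
move=> u u' eq_u v v' eq_v; transitivity (u' ++ v).
- exact: (Tn_eq_cat2 [::] v _ _ eq_u).
- by have := Tn_eq_cat2 u' [::] _ _ eq_v; rewrite !cats0.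
Qed.

Global Instance cons_Tn_eq_Proper : Proper (eq ==> Tn_eq n ==> Tn_eq n) (@cons gen).
Proof. by move=> g _ <- u v eq_uv; rewrite -cat1s eq_uv; reflexivity. Qed.

Lemma Tn_rel_cat u v b : Tn_rel n u v -> u ++ b ~ v ++ b.
Proof. exact: (Tn_step [::] b). Qed.

Lemma tK i b : 0 < i < n -> T i :: T i :: b ~ b.
Proof. by move=> i_ok; apply: Tn_rel_cat (rel_tt _ _); lia. Qed.

Lemma zK b : Z :: Z :: b ~ b.
Proof. exact: Tn_rel_cat (rel_zz n). Qed.

Lemma zT i b : 0 < i < n -> Z :: T i :: b ~ T i :: Z :: b.
Proof. by move=> i_ok; apply: Tn_rel_cat (rel_zt _ _); lia. Qed.

Lemma braid i b : 0 < i -> i.+1 < n ->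
  T i :: T i.+1 :: T i :: b ~ T i.+1 :: T i :: T i.+1 :: b.
Proof.
move=> i_gt0 lt_i1n.
transitivity [:: T i, T i.+1, T i, T i.+1, T i, T i.+1, T i.+1, T i, T i.+1 & b].
  by rewrite (tK i.+1) ?(tK i) ?(tK i.+1); [reflexivity | lia..].
by apply: (Tn_rel_cat _ _ [:: T i.+1, T i, T i.+1 & b] (rel_braid _ _)); lia.
Qed.

Definition far (k l : nat) := (k + 2 <= l) || (l + 2 <= k).

Lemma far_rel k l b : 0 < k < n -> 0 < l < n -> far k l ->
  T k :: T l :: T k :: T l :: b ~ Z :: b.
Proof.
have rel_far_cat u v c : 0 < u -> u + 2 <= v -> v < n ->
    T u :: T v :: T u :: T v :: c ~ Z :: c.
  by move=> *; apply: (Tn_rel_cat _ _ c (rel_far _ _ _)); lia.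
move=> k_ok l_ok /orP[kl_far | lk_far]; first by apply: rel_far_cat; lia.
transitivity [:: T k, T l, T k, T l, T l, T k, T l, T k, Z & b].
  by rewrite (rel_far_cat l k) ?zK; [reflexivity | lia..].
by rewrite (tK l) // (tK k) // (tK l) // (tK k) //; reflexivity.
Qed.

Lemma farC k l b : 0 < k < n -> 0 < l < n -> far k l ->
  T k :: T l :: b ~ T l :: T k :: Z :: b.
Proof.
move=> k_ok l_ok kl_far.
transitivity [:: T k, T l, T k, T l, T l, T k & b].
  by rewrite (tK l) // (tK k) //; reflexivity.
by rewrite far_rel // zT // zT //; reflexivity.
Qed.

Definition gen_ok (g : gen) := if g is T i then 0 < i < n else true.

Lemma zC X b : all gen_ok X -> Z :: X ++ b ~ X ++ Z :: b.
Proof.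
elim: X => [|[|i] X IH] /=; first by reflexivity.
  by move=> X_ok; rewrite zK -IH // zK; reflexivity.
by case/andP=> i_ok X_ok; rewrite zT // IH //; reflexivity.
Qed.

Lemma brup_ok i d : 0 < i -> i + d < n -> all gen_ok (brup i d).
Proof.
elim: d i => [|d IH] i i_gt0 lt_idn /=; first by rewrite andbT; lia.
by rewrite /act_s /winv /= !all_cat /= IH /=; lia.
Qed.

Lemma brupS i d b : brup i d.+1 ++ b = T i :: brup i.+1 d ++ T i :: Z :: b.
Proof. by rewrite /= /act_s /winv /= -!catA. Qed.

Lemma far_conj_swap i k Y b : 0 < i < n -> 0 < k < n -> far k i -> all gen_ok Y ->
  T k :: T i :: Y ++ T i :: Z :: T k :: b ~ T i :: T k :: Y ++ T k :: T i :: Z :: b.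
Proof.
move=> i_ok k_ok ki_far Y_ok.
rewrite (farC k i) // zC // (zT i) // zK (farC i k b) //; first by reflexivity.
by rewrite /far orbC.
Qed.

Lemma conj_brup_pred k d b : T k :: brup k.+1 d ++ T k :: b ~ brup k d.+1 ++ Z :: b.
Proof. by rewrite brupS zK; reflexivity. Qed.

Lemma conj_brup_first i d b : 0 < i < n ->
  T i :: brup i d.+1 ++ T i :: b ~ brup i.+1 d ++ Z :: b.
Proof. by move=> i_ok; rewrite brupS (tK i) // zT // (tK i) //; reflexivity. Qed.

Lemma conj_brup_succ i d b : 0 < i -> i + d.+2 <= n ->
  T (i + d.+1) :: brup i d ++ T (i + d.+1) :: b ~ brup i d.+1 ++ Z :: b.
Proof.
elim: d i b => [|d IH] i b i_gt0 le_idn.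
  by rewrite addn1 brupS /= zK -braid; [reflexivity | lia..].
rewrite (brupS i d) far_conj_swap ?brup_ok /far; [|lia..].
rewrite -addSnnS IH; [|lia..].
by rewrite zT ?zK ?(brupS i d.+1) ?zK; [reflexivity | lia..].
Qed.

Lemma conj_brup_last i d b : 0 < i -> i + d.+2 <= n ->
  T (i + d.+1) :: brup i d.+1 ++ T (i + d.+1) :: b ~ brup i d ++ Z :: b.
Proof.
move=> i_gt0 le_idn; have j_ok : 0 < i + d.+1 < n by lia.
transitivity (T (i + d.+1) :: brup i d.+1 ++ Z :: T (i + d.+1) :: Z :: b).
  by rewrite zT // zK; reflexivity.
by rewrite -conj_brup_succ // (tK (i + d.+1)) // (tK (i + d.+1)) //; reflexivity.
Qed.

Lemma conj_brup_far i d k b : 0 < i -> i + d < n -> 0 < k < n ->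
  [|| k.+1 < i, i + d.+1 < k | i < k < i + d] ->
  T k :: brup i d ++ T k :: b ~ brup i d ++ Z :: b.
Proof.
elim/ltn_ind: d i k b => -[|d] IH i k b i_gt0 lt_idn k_ok k_out.
  by rewrite /= (farC k i) ?zT ?(tK k) /far; [reflexivity | lia..].
have [ki_far | ki_near] := boolP (far k i).
  rewrite (brupS i d) far_conj_swap ?brup_ok //; [|lia..].
  move: ki_far; rewrite /far => ki_far.
  by rewrite IH ?zT ?zK ?(brupS i d) ?zK; [reflexivity | lia..].
have {ki_near} k_eq : k = i.+1 by move: ki_near k_out; rewrite /far; lia.
subst k.
case: d IH lt_idn k_out => [|d] IH lt_idn k_out; first by lia.
rewrite (brupS i d.+1) (brupS i.+1 d) -(braid i); [|lia..].
rewrite (zT i) ?zK; [|lia..].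
rewrite -(braid i b); [|lia..].
rewrite (IH d _ i.+2 i); [|lia..].
by rewrite zT ?(brupS i d.+1) ?(brupS i.+1 d) ?zK; [reflexivity | lia..].
Qed.

Lemma br_lt i j : i < j -> br i j = brup i (j - i - 1).
Proof. by rewrite /br => ->. Qed.

Lemma br_gt i j : j < i -> br i j = brup j (i - j - 1) ++ [:: Z].
Proof. by move=> lt_ji; rewrite /br ltnNge ltnW. Qed.

Lemma brC i j : i != j -> br i j ~ br j i ++ [:: Z].
Proof.
case: ltngtP => // [lt_ij | lt_ji] _.
  by rewrite (br_lt _ _ lt_ij) (br_gt _ _ lt_ij) -catA /= zK cats0; reflexivity.
by rewrite (br_gt _ _ lt_ji) (br_lt _ _ lt_ji); reflexivity.
Qed.

Lemma br_addS i d : br i (i + d.+1) = brup i d.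
Proof. by rewrite br_lt; [congr brup | ]; lia. Qed.

Lemma conj_br_lt i j k : 0 < i -> i < j -> j <= n -> 0 < k < n ->
  T k :: br i j ++ [:: T k] ~ br (s_ k i) (s_ k j) ++ [:: Z].
Proof.
move=> i_gt0 lt_ij le_jn k_ok.
have {lt_ij} [d e_j] : exists d, j = i + d.+1 by exists (j - i).-1; lia.
subst j; rewrite br_addS.
have [e_i | ne_k1i] := eqVneq k.+1 i.
  subst i; rewrite s_R s_D ?addSnnS ?br_addS; [exact: conj_brup_pred | lia..].
have [e_i | ne_ki] := eqVneq k i.
  subst k; rewrite s_L; case: d le_jn => [|d] le_jn.
    by rewrite addn1 s_R br_gt // subSnn /= (tK i) // zK; reflexivity.
  by rewrite s_D -1?addSnnS ?br_addS; [exact: conj_brup_first | lia..].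
rewrite (s_D k i); [|lia..].
have [e_j | ne_kj] := eqVneq k.+1 (i + d.+1).
  case: d e_j le_jn => [|d] e_j le_jn; first by lia.
  have e_k : k = i + d.+1 by lia.
  subst k; rewrite [i + d.+2]addnS s_R br_addS.
  by apply: conj_brup_last; lia.
have [e_k | ne_kj'] := eqVneq k (i + d.+1).
  subst k; rewrite s_L -addnS br_addS.
  by apply: conj_brup_succ; lia.
by rewrite s_D ?br_addS; [apply: conj_brup_far | ..]; lia.
Qed.

End Tn.

Theorem lemma3p4 (n : nat) (hn : 4 <= n) (i j k : nat)
  (hi : 1 <= i <= n) (hj : 1 <= j <= n) (hij : i != j)
  (hk : 1 <= k <= n - 1) :
  Tn_eq n (act_s k (br i j)) (br (s_ k i) (s_ k j) ++ [:: Z]).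
Proof.
have k_ok : 0 < k < n by lia.
rewrite /act_s /winv /=.
case: ltngtP hij => // [lt_ij | lt_ji] _; first by apply: conj_br_lt; lia.
rewrite br_gt // -catA /= zT //.
have -> : T k :: brup j (i - j - 1) ++ [:: T k; Z] =
          (T k :: br j i ++ [:: T k]) ++ [:: Z] by rewrite br_lt //= -catA.
have ne_s : s_ k j != s_ k i by rewrite (inj_eq (can_inj (s_K k))) ltn_eqF.
rewrite conj_br_lt; [|lia..].
by rewrite (brC _ _ _ ne_s) -!catA /= zK; reflexivity.
Qed.
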